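(* Let $n,d,c\in\mathbb{N}$ with $d\ge 50$ and $c\in[d]$, let $\mathcal{F}\subseteq 2^{[n]}$ be a hereditary family with $\delta(\mathcal{F})\ge 2^{d-1}-c+1$, and let $P$ be an isolated pile of $\mathcal{F}$ with $\sum_{x\in P}\omega_{\mathcal{F}}(x)<2^d-c$. Then the number $u$ of good vertices in $P$ satisfies $u\le 7$.
   Context: A family is hereditary if it is closed under taking subsets. $d_{\mathcal{F}}(x)=|\{F\in\mathcal{F}:x\in F\}|$, $\delta(\mathcal{F})=\min_x d_{\mathcal{F}}(x)$, $N(x)=\bigcup_{x\in F\in\mathcal{F}}F$. The weight of $x$ is $\omega_{\mathcal{F}}(x)=\sum_{x\in F\in\mathcal{F}}\frac{1}{|F|}$. A vertex $x$ is good if $|N(x)|\ge d+1$ and bad if $|N(x)|=d$. A set $P\subseteq[n]$ with $|P|=d$ is a pile of $\mathcal{F}$ if $P\subseteq N(y)$ for every $y\in P$, and there exists $z\in P$ with $N(z)=P$; a pile is isolated if it is disjoint from every other pile. *)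

From mathcomp Require Import all_boot all_order all_algebra.
Set Implicit Arguments. Unset Strict Implicit. Unset Printing Implicit Defensive.
Import GRing.Theory Num.Theory.

Section Defs.
Variable n : nat.
Implicit Types (F : {set {set 'I_n}}) (x y z : 'I_n) (P : {set 'I_n}).

Definition hereditary F : Prop :=
  forall A B : {set 'I_n}, A \in F -> B \subset A -> B \in F.

Definition deg F x : nat := #|[set A in F | x \in A]|.

Definition min_deg_ge F (k : nat) : Prop := forall x, k <= deg F x.

Definition nbhd F x : {set 'I_n} := \bigcup_(A in F | x \in A) A.

Definition weight F x : rat := \sum_(A in F | x \in A) (#|A|%:R)^-1.

Definition good F (d : nat) x : bool := d.+1 <= #|nbhd F x|.
Definition bad F (d : nat) x : bool := #|nbhd F x| == d.

Definition pile F (d : nat) P : Prop :=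
  #|P| = d /\ (forall y, y \in P -> P \subset nbhd F y) /\
  (exists2 z, z \in P & nbhd F z = P).

Definition isolated_pile F (d : nat) P : Prop :=
  pile F d P /\ (forall Q, pile F d Q -> Q <> P -> [disjoint P & Q]).
End Defs.

(* For x in P, split the sets of F through x into those inside P and those
   leaving P.  With M the number of subsets of P missing from F, m(x) the number
   of them whose complement in P contains x, and o(x) the number of members of F
   through x not contained in P, one gets deg(x) + M = 2^(d-1) + m(x) + o(x).
   Complements of missing sets form a down-closed family, so m(z) <= M/2 at the
   vertex z with N(z) = P, where also o(z) = 0; the degree bound then gives
   M + 2 <= 2c.  The sets inside P carry total weight exactly 2^d - M - 1, so the
   weight W of the sets leaving P is below k = M + 1 - c, while every good vertex
   lies on a leaving pair, whence u < 2k.  Finally m(x) + o(x) >= k at every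
   vertex, and each set through x of size at most L weighs at least 1/L, while a
   larger one brings along a whole cube of 2^L - 1 such sets; summing over P gives
   d K / L <= M + 2W < 3M + 2 - 2c for suitable K <= k, L with K < 2^L, which is
   impossible for d >= 50 as soon as k >= 5. *)

From mathcomp Require Import all_boot all_order all_algebra.
From mathcomp Require Import zify lra.
Import Order.TTheory GRing.Theory Num.Theory.
Set Implicit Arguments. Unset Strict Implicit. Unset Printing Implicit Defensive.

Section FinsetCounting.
Variable T : finType.
Implicit Types (A P Q R S : {set T}) (p : pred {set T}).

Lemma cards_sep_predC (X : {set T}) (q : pred T) :
  (#|[set a in X | q a]| + #|[set a in X | ~~ q a]| = #|X|)%N.
Proof.
by rewrite -(cardsID [set a | q a] X); congr (_ + _);
  apply: eq_card => a; rewrite !inE andbC.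
Qed.

Lemma card_subset_interval R S : R \subset S ->
  #|[set A : {set T} | (R \subset A) && (A \subset S)]| = 2 ^ (#|S| - #|R|).
Proof.
move=> RS; rewrite -{2}(setIidPr RS) -cardsD -card_powerset.
have -> : [set A : {set T} | (R \subset A) && (A \subset S)] =
          [set B :|: R | B in powerset (S :\: R)].
  apply/setP=> A; rewrite inE; apply/andP/imsetP => [[RA AS]|[B]].
    exists (A :\: R); first by rewrite inE setSD.
    apply/setP=> x; rewrite !inE; case: (boolP (x \in R)) => [/(subsetP RA)|]//.
    by rewrite orbF.
  rewrite inE => BS ->; rewrite subsetUr subUset RS andbT /=.
  by split=> //; apply: subset_trans BS (subsetDl _ _).
apply: card_in_imset => B1 B2; rewrite !inE => /subsetP sB1 /subsetP sB2 E.
apply/setP=> x; have := congr1 (fun X : {set T} => x \in X) E; rewrite !inE.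
case xR: (x \in R); last by rewrite !orbF.
by case: (boolP (x \in B1)) => [/sB1|_]; case: (boolP (x \in B2)) => [/sB2|_];
  rewrite ?inE ?xR ?andbF.
Qed.

Lemma exists_subset_between_card R S k :
  R \subset S -> (#|R| <= k <= #|S|)%N ->
  exists Q, [/\ R \subset Q, Q \subset S & #|Q| = k].
Proof.
move=> RS /andP[]; elim: k => [|k IH].
  by rewrite leqn0 cards_eq0 => /eqP -> _; exists set0; rewrite !sub0set cards0.
rewrite leq_eqVlt => /orP[/eqP <- _|]; first by exists R.
rewrite ltnS => Rk kS; have [Q [RQ QS cQ]] := IH Rk (ltnW kS).
have /properP[_ [x xS xQ]] : Q \proper S by rewrite properEcard QS cQ.
exists (x |: Q); rewrite cardsU1 xQ cQ subUset sub1set xS QS.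
by split=> //; apply: subset_trans RQ (subsetUr _ _).
Qed.

Lemma card_subset_setD P p :
  #|[set A : {set T} | (A \subset P) && p A]| =
  #|[set A : {set T} | (A \subset P) && p (P :\: A)]|.
Proof.
have DDK A : A \subset P -> P :\: (P :\: A) = A.
  by move=> AP; rewrite setDDr setDv set0U; apply/setIidPr.
rewrite -[RHS](@card_in_imset _ _ (setD P)) => [|A B]; last first.
  by rewrite !inE => /andP[AP _] /andP[BP _] E; rewrite -(DDK A AP) -(DDK B BP) E.
apply: eq_card => A; rewrite inE; apply/andP/imsetP.
  by case=> AP pA; exists (P :\: A); rewrite ?inE ?subsetDl DDK.
by case=> B; rewrite inE => /andP[_ pB] ->; rewrite subsetDl.
Qed.

End FinsetCounting.

Lemma arith_pile_bound (d c N u : nat) : 50 <= d -> c <= d -> N + 2 <= 2 * c ->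
  u + 2 * c < 2 * (N + 1) ->
  (forall K L, 0 < L -> K < 2 ^ L -> K + c <= N + 1 -> d * K + 2 * c * L < L * (3 * N + 2)) ->
  u <= 7.
Proof.
move=> d50 cd Nc uN key; rewrite leqNgt; apply/negP => u8.
(* Use K = min(N + 1 - c, 31) with the least L such that K < 2 ^ L. *)
have [k7|k7] := leqP (N + 1 - c) 7.
  by have := key (N + 1 - c) 3 isT ltac:(lia) ltac:(lia); nia.
have [k15|k15] := leqP (N + 1 - c) 15.
  by have := key (N + 1 - c) 4 isT ltac:(lia) ltac:(lia); nia.
have [k31|k31] := leqP (N + 1 - c) 31.
  by have := key (N + 1 - c) 5 isT ltac:(lia) ltac:(lia); nia.
by have := key 31 5 isT isT ltac:(lia); nia.
Qed.

Section NumSums.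
Local Open Scope ring_scope.

Lemma ler_sum_subpred {R : numDomainType} (I : finType) (p1 p2 : pred I) (f : I -> R) :
  subpred p1 p2 -> (forall i, 0 <= f i) ->
  \sum_(i | p1 i) f i <= \sum_(i | p2 i) f i.
Proof.
move=> p12 f0; rewrite [leRHS](bigID p1) /=.
rewrite (eq_bigl p1) => [|i]; last by apply/andb_idl/p12.
by rewrite lerDl sumr_ge0.
Qed.

Lemma ler_sum_const {R : numDomainType} (I : finType) (A : {pred I}) (f : I -> R) a :
  (forall i, i \in A -> a <= f i) -> a *+ #|A| <= \sum_(i in A) f i.
Proof. by move=> le_af; rewrite -sumr_const; apply: ler_sum. Qed.

Lemma sum_inv_card_interval {R : numFieldType} (T : finType) (A Q : {set T})
    (p : pred {set T}) :
  A \subset Q -> (0 < #|A|)%N ->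
  (forall S : {set T}, A \subset S -> S \proper Q -> p S) ->
  (2 ^ (#|Q| - #|A|) - 1)%:R / #|Q|.-1%:R <= \sum_(S | p S) #|S|%:R^-1 :> R.
Proof.
move=> AQ A0 pS; set G := [set S : {set T} | (A \subset S) && (S \proper Q)].
have cG : #|G| = (2 ^ (#|Q| - #|A|) - 1)%N.
  rewrite -card_subset_interval // [in RHS](cardsD1 Q) inE AQ subxx /= add1n subn1.
  by apply: eq_card => S; rewrite !inE properEneq andbCA.
apply: (@le_trans _ _ (\sum_(S in G) #|S|%:R^-1)); last first.
  apply: ler_sum_subpred => S; last by rewrite invr_ge0.
  by rewrite inE => /andP[]; apply: pS.
rewrite -cG mulrC mulr_natr; apply: ler_sum_const => S; rewrite inE.
case/andP=> AS /proper_card SQ; have S0 := leq_trans A0 (subset_leq_card AS).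
have Q1 : (0 < #|Q|.-1)%N by lia.
by rewrite lef_pV2 ?posrE ?ltr0n // ler_nat; lia.
Qed.

Lemma sum_sum_inv_card {R : numFieldType} (T : finType) (X : {set T})
    (G : pred {set T}) :
  (forall A, G A -> A \subset X) ->
  \sum_(x in X) \sum_(A | G A && (x \in A)) #|A|%:R^-1 =
  #|[set A | G A && (A != set0)]|%:R :> R.
Proof.
move=> GX; rewrite (exchange_big_dep G) /=; last by move=> x A _ /andP[].
rewrite -sumr_const big_mkcond [RHS]big_mkcond /=; apply: eq_bigr => A _.
rewrite inE; case: (boolP (G A)) => //= GA.
rewrite (eq_bigl (fun x => x \in A)) => [|x]; last first.
  by rewrite andb_idl // => /(subsetP (GX A GA)).
rewrite sumr_const; case: (eqVneq A set0) => [->|A0]; first by rewrite cards0.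
by rewrite -[_ *+ _]mulr_natr mulVf // pnatr_eq0 cards_eq0.
Qed.

Lemma card_div_le_sum_inv_card {R : numFieldType} (T : finType) (G : {set {set T}}) m :
  (forall S, S \in G -> 0 < #|S| <= m)%N ->
  #|G|%:R / m%:R <= \sum_(S in G) #|S|%:R^-1 :> R.
Proof.
move=> Gm; rewrite mulrC mulr_natr; apply: ler_sum_const => S /Gm /andP[S0 Sm].
by rewrite lef_pV2 ?posrE ?ltr0n ?ler_nat // (leq_trans S0).
Qed.

Lemma ler_div_2divS {R : numFieldType} (a L : nat) : (0 < L)%N ->
  a%:R / L%:R <= 2 * (a%:R / L.+1%:R) :> R.
Proof.
move=> L0; rewrite mulrA ler_pdivrMr ?ltr0n // mulrAC ler_pdivlMr ?ltr0n //.
by rewrite -!natrM ler_nat; nia.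
Qed.

End NumSums.

Section Pile.
Variables (n : nat) (F : {set {set 'I_n}}) (P : {set 'I_n}).
Implicit Types (A S T : {set 'I_n}) (x y : 'I_n).

(* In the notation of the proof sketch above, M = #|co_missing|,
   m(x) = co_missing_deg x and o(x) = out_deg x. *)
Definition co_missing := [set T : {set 'I_n} | (T \subset P) && (P :\: T \notin F)].
Definition co_missing_deg x := #|[set T in co_missing | x \in T]|.
Definition out_deg x := #|[set A in F | (x \in A) && ~~ (A \subset P)]|.

Lemma deg_add_card_co_missing x : x \in P ->
  (deg F x + #|co_missing| = 2 ^ #|P|.-1 + co_missing_deg x + out_deg x)%N.
Proof.
move=> xP; set inside := [set A in F | (x \in A) && (A \subset P)].
have deg_split : deg F x = (#|inside| + out_deg x)%N.
  rewrite /deg -(cards_sep_predC [set A in F | x \in A] (fun A => A \subset P)).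
  by congr (_ + _); apply: eq_card => A; rewrite !inE andbA.
have M_split := cards_sep_predC co_missing (fun T => x \in T).
have sub_split : 2 ^ #|P|.-1 = (#|inside| +
    #|[set A : {set 'I_n} | (A \subset P) && ((x \in A) && (A \notin F))]|)%N.
  have := @card_subset_interval _ [set x] P; rewrite sub1set xP cards1 subn1 => /(_ isT) <-.
  rewrite -[LHS](cards_sep_predC _ (fun A => A \in F)).
  by congr (_ + _); apply: eq_card => A; rewrite !inE sub1set;
    case: (x \in A); case: (A \subset P); case: (A \in F).
have missing_compl : #|[set A : {set 'I_n} | (A \subset P) && ((x \in A) && (A \notin F))]|
    = #|[set T in co_missing | x \notin T]|.
  rewrite card_subset_setD; apply: eq_card => T; rewrite !inE xP /=.
  by case: (x \in T); case: (T \subset P); case: (P :\: T \in F).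
rewrite /co_missing_deg; lia.
Qed.

Lemma out_deg_eq0 z : nbhd F z = P -> out_deg z = 0%N.
Proof.
move=> Nz; apply/eqP; rewrite cards_eq0; apply/eqP/setP => A; rewrite !inE.
case: (boolP (A \in F)) => //= AF; case: (boolP (z \in A)) => //= zA.
suff : A \subset nbhd F z by rewrite Nz => ->.
by apply: (bigcup_sup A); rewrite AF zA.
Qed.

Lemma card_F_subset_add_co_missing :
  (#|[set A in F | A \subset P]| + #|co_missing| = 2 ^ #|P|)%N.
Proof.
rewrite -card_powerset -(cards_sep_predC (powerset P) (fun A => A \in F)).
congr (_ + _); first by apply: eq_card => A; rewrite !inE andbC.
rewrite /co_missing -(card_subset_setD P (fun A => A \notin F)).
by apply: eq_card => A; rewrite !inE.
Qed.

Local Open Scope ring_scope.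

Definition co_missing_weight x : rat := \sum_(T in co_missing | x \in T) #|T|%:R^-1.
Definition out_weight x : rat := \sum_(A in F | (x \in A) && ~~ (A \subset P)) #|A|%:R^-1.

Lemma sum_weight_eq : set0 \in F ->
  \sum_(x in P) weight F x =
  (2 ^ #|P|)%:R - #|co_missing|%:R - 1 + \sum_(x in P) out_weight x.
Proof.
move=> F0; have inside :
    \sum_(x in P) \sum_(A | ((A \in F) && (A \subset P)) && (x \in A)) #|A|%:R^-1
    = (2 ^ #|P|)%:R - #|co_missing|%:R - 1 :> rat.
  rewrite sum_sum_inv_card => [|A /andP[] //].
  rewrite -card_F_subset_add_co_missing [#|[set A in F | _]|](cardsD1 set0).
  rewrite inE F0 sub0set /=.
  have -> : #|[set A | (A \in F) && (A \subset P) && (A != set0)]| =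
            #|[set A in F | A \subset P] :\ set0|.
    by apply: eq_card => A; rewrite !inE andbC.
  by rewrite !natrD; lra.
rewrite -inside -big_split; apply: eq_bigr => x _.
rewrite /weight (bigID (fun A => A \subset P)) /=.
by congr (_ + _); apply: eq_bigl => A; rewrite ?andbA // andbAC.
Qed.

Lemma sum_co_missing_weight_le :
  \sum_(x in P) co_missing_weight x <= #|co_missing|%:R.
Proof.
rewrite (@sum_sum_inv_card _ _ _ (fun T => T \in co_missing)) => [|T]; last first.
  by rewrite inE => /andP[].
by rewrite ler_nat; apply/subset_leq_card/subsetP => T; rewrite inE => /andP[].
Qed.

Lemma co_missing_weight_ge_small x L :
  (forall T, T \in co_missing -> x \in T -> #|T| <= L)%N ->
  (co_missing_deg x)%:R / L%:R <= co_missing_weight x.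
Proof.
move=> small; rewrite /co_missing_weight (eq_bigl [in [set T in co_missing | x \in T]]);
  last by move=> T; rewrite inE.
apply: card_div_le_sum_inv_card => T; rewrite inE => /andP[MT xT].
by rewrite small // andbT card_gt0; apply/set0Pn; exists x.
Qed.

Lemma out_weight_ge_small x L :
  (forall A, A \in F -> x \in A -> ~~ (A \subset P) -> #|A| <= L.+1)%N ->
  (out_deg x)%:R / L.+1%:R <= out_weight x.
Proof.
move=> small; rewrite /out_weight (eq_bigl [in [set A in F | (x \in A) && ~~ (A \subset P)]]);
  last by move=> A; rewrite inE.
apply: card_div_le_sum_inv_card => A; rewrite inE => /and3P[AF xA AP].
by rewrite small // andbT card_gt0; apply/set0Pn; exists x.
Qed.

Hypothesis hF : hereditary F.

Lemma co_missing_down T S : T \in co_missing -> S \subset T -> S \in co_missing.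
Proof.
rewrite !inE => /andP[TP nT] ST; rewrite (subset_trans ST TP).
by apply: contra nT => /hF; apply; apply: setDS.
Qed.

Lemma co_missing_deg_le_half x : (2 * co_missing_deg x <= #|co_missing|)%N.
Proof.
rewrite -(cards_sep_predC co_missing (fun T => x \in T)) mul2n -addnn leq_add2l.
rewrite /co_missing_deg -[X in (X <= _)%N](@card_in_imset _ _ (fun T => T :\ x)) => [|T1 T2];
  last first.
  by rewrite !inE => /andP[_ x1] /andP[_ x2] E; rewrite -(setD1K x1) -(setD1K x2) E.
apply/subset_leq_card/subsetP => S /imsetP[T]; rewrite inE => /andP[MT xT] ->.
by rewrite inE setD11 andbT (co_missing_down MT) ?subD1set.
Qed.

Lemma co_missing_weight_ge_big T x L : T \in co_missing -> x \in T ->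
  (L < #|T|)%N -> (2 ^ L - 1)%:R / L%:R <= co_missing_weight x.
Proof.
move=> MT xT LT; have xT' : [set x] \subset T by rewrite sub1set.
have cxT : (#|[set x]| <= L.+1 <= #|T|)%N by rewrite cards1.
have [Q [xQ QT cQ]] := exists_subset_between_card xT' cxT.
have := @sum_inv_card_interval _ _ _ _ (fun S => (S \in co_missing) && (x \in S)) xQ.
rewrite cQ cards1 subSS subn0; apply=> // S; rewrite sub1set => xS /properP[SQ _].
by rewrite xS andbT (co_missing_down MT) // (subset_trans SQ QT).
Qed.

Lemma out_weight_ge_big A x L : x \in P -> A \in F -> x \in A -> ~~ (A \subset P) ->
  (L.+1 < #|A|)%N -> (2 ^ L - 1)%:R / L.+1%:R <= out_weight x.
Proof.
move=> xP AF xA /subsetPn[y yA yP] LA; have xy : x != y by apply: contraNneq yP => <-.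
have xyA : [set x; y] \subset A by rewrite subUset !sub1set xA yA.
have cxyA : (#|[set x; y]| <= L.+2 <= #|A|)%N by rewrite cards2 xy.
have [Q [xyQ QA cQ]] := exists_subset_between_card xyA cxyA.
have := @sum_inv_card_interval _ _ _ _
  (fun S => (S \in F) && ((x \in S) && ~~ (S \subset P))) xyQ.
rewrite cQ cards2 xy !subSS subn0; apply=> // S xyS /properP[SQ _].
rewrite (hF AF (subset_trans SQ QA)); move: xyS; rewrite subUset !sub1set => /andP[-> yS].
by apply/subsetPn; exists y.
Qed.

Lemma out_weight_ge_half x : x \in P -> (#|P| < #|nbhd F x|)%N ->
  2^-1 <= out_weight x.
Proof.
move=> xP Pn; have /subsetPn[y] : ~~ (nbhd F x \subset P).
  by apply: contraTN Pn => /subset_leq_card; rewrite -leqNgt.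
move=> /bigcupP[A /andP[AF xA] yA] yP; have xy : x != y by apply: contraNneq yP => <-.
have xyF : [set x; y] \in F by apply: hF AF _; rewrite subUset !sub1set xA yA.
rewrite /out_weight (bigD1 [set x; y]) /=; last first.
  by rewrite xyF !inE eqxx; apply/subsetPn; exists y; rewrite ?inE ?eqxx ?orbT.
by rewrite cards2 xy lerDl sumr_ge0 // => A' _; rewrite invr_ge0.
Qed.

Lemma vertex_weight_ge x K L : x \in P -> (0 < L)%N -> (K < 2 ^ L)%N ->
  (K <= co_missing_deg x + out_deg x)%N ->
  K%:R / L%:R <= co_missing_weight x + 2 * out_weight x.
Proof.
move=> xP L0 KL Kdeg.
have cmw0 : 0 <= co_missing_weight x by apply: sumr_ge0 => T _; rewrite invr_ge0.
have ow0 : 0 <= out_weight x by apply: sumr_ge0 => A _; rewrite invr_ge0.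
have cube : K%:R / L%:R <= (2 ^ L - 1)%:R / L%:R :> rat.
  by rewrite ler_pM2r ?invr_gt0 ?ltr0n // ler_nat; lia.
(* A set through x larger than L (inside P) or L + 1 (leaving P) contains a cube
   of 2^L - 1 sets through x of the same kind; otherwise all of them are small. *)
have [/existsP[T /and3P[MT xT LT]]|/existsPn smallT] :=
  boolP [exists T, [&& T \in co_missing, x \in T & (L < #|T|)%N]].
  by have := co_missing_weight_ge_big MT xT LT; lra.
have [/existsP[A /and4P[AF xA AP LA]]|/existsPn smallA] :=
  boolP [exists A, [&& A \in F, x \in A, ~~ (A \subset P) & (L.+1 < #|A|)%N]].
  apply: (le_trans cube); apply: (le_trans (ler_div_2divS _ L0)).
  by apply: ler_wpDl cmw0 _; rewrite ler_pM2l // (out_weight_ge_big xP AF).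
have cmw_ge : (co_missing_deg x)%:R / L%:R <= co_missing_weight x.
  by apply: co_missing_weight_ge_small => T MT xT; have := smallT T; rewrite MT xT -leqNgt.
have ow_ge : (out_deg x)%:R / L.+1%:R <= out_weight x.
  by apply: out_weight_ge_small => A AF xA AP; have := smallA A; rewrite AF xA AP -leqNgt.
apply: (@le_trans _ _ ((co_missing_deg x)%:R / L%:R + (out_deg x)%:R / L%:R)).
  by rewrite -mulrDl -natrD ler_pM2r ?invr_gt0 ?ltr0n // ler_nat.
apply: lerD cmw_ge (le_trans (ler_div_2divS _ L0) _).
by rewrite ler_pM2l.
Qed.

Variable c : nat.
Hypothesis deg_ge : forall x, x \in P -> (2 ^ #|P|.-1 + 1 <= deg F x + c)%N.

Lemma co_missing_deg_lb x : x \in P ->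
  (#|co_missing| + 1 <= co_missing_deg x + out_deg x + c)%N.
Proof. by move=> xP; have := deg_add_card_co_missing xP; have := deg_ge xP; lia. Qed.

Variable z : 'I_n.
Hypotheses (zP : z \in P) (Nz : nbhd F z = P).

Lemma set0_in_family : set0 \in F.
Proof.
move: zP; rewrite -{1}Nz => /bigcupP[A /andP[AF _] _].
by apply: hF AF _; apply: sub0set.
Qed.

Lemma card_co_missing_le : (#|co_missing| + 2 <= 2 * c)%N.
Proof.
have := deg_add_card_co_missing zP; rewrite out_deg_eq0 // addn0.
by have := deg_ge zP; have := co_missing_deg_le_half z; lia.
Qed.

Hypothesis weight_lt : \sum_(x in P) weight F x < (2 ^ #|P|)%:R - c%:R.

Lemma sum_out_weight_lt :
  \sum_(x in P) out_weight x < #|co_missing|%:R + 1 - c%:R.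
Proof. by move: weight_lt; rewrite (sum_weight_eq set0_in_family) => ?; lra. Qed.

Lemma card_good_lt :
  (#|[set x in P | good F #|P| x]| + 2 * c < 2 * (#|co_missing| + 1))%N.
Proof.
rewrite -(ltr_nat rat).
have : #|[set x in P | good F #|P| x]|%:R / 2 <= \sum_(x in P) out_weight x.
  apply: (@le_trans _ _ (\sum_(x in [set x in P | good F #|P| x]) out_weight x)).
    rewrite mulrC mulr_natr; apply: ler_sum_const => x; rewrite inE => /andP[xP].
    exact: out_weight_ge_half.
  apply: ler_sum_subpred => [x|x]; first by rewrite inE => /andP[].
  by apply: sumr_ge0 => A _; rewrite invr_ge0.
by have := sum_out_weight_lt; rewrite !natrD; lra.
Qed.

Lemma summed_vertex_bound K L : (0 < L)%N -> (K < 2 ^ L)%N -> (K + c <= #|co_missing| + 1)%N ->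
  (#|P| * K + 2 * c * L < L * (3 * #|co_missing| + 2))%N.
Proof.
move=> L0 KL Kc; set N := #|co_missing|.
have sum_lt : \sum_(x in P) (co_missing_weight x + 2 * out_weight x) <
              3 * N%:R + 2 - 2 * c%:R.
  rewrite big_split -mulr_sumr /=.
  by have := sum_co_missing_weight_le; have := sum_out_weight_lt; lra.
have : (K%:R / L%:R) *+ #|P| <= \sum_(x in P) (co_missing_weight x + 2 * out_weight x).
  apply: ler_sum_const => x xP; apply: vertex_weight_ge => //.
  by have := co_missing_deg_lb xP; lia.
move=> /le_lt_trans /(_ sum_lt); rewrite -mulr_natr mulrAC ltr_pdivrMr ?ltr0n //.
by rewrite -(ltr_nat rat) !natrD !natrM; lra.
Qed.

End Pile.

Local Open Scope ring_scope.

Theorem mainTheorem19 (n d c : nat) (F : {set {set 'I_n}}) (P : {set 'I_n}) :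
  (50 <= d)%N -> (1 <= c <= d)%N ->
  hereditary F ->
  min_deg_ge F (2 ^ d.-1 - c + 1)%N ->
  isolated_pile F d P ->
  \sum_(x in P) weight F x < (2 ^ d)%:R - c%:R ->
  (#|[set x in P | good F d x]| <= 7)%N.
Proof.
move=> d50 /andP[_ cd] hF hdeg [[cP [_ [z zP Nz]]] _] hsum.
have deg_ge x : x \in P -> (2 ^ #|P|.-1 + 1 <= deg F x + c)%N.
  by move=> _; have := hdeg x; have := ltn_expl d.-1 (ltnSn 1); rewrite cP; lia.
rewrite -cP in hsum d50 cd *.
apply: (arith_pile_bound d50 cd (card_co_missing_le hF deg_ge zP Nz)).
  exact: (card_good_lt hF zP Nz hsum).
by move=> K L; apply: (summed_vertex_bound hF deg_ge zP Nz hsum).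
Qed.
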